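(* Let $R$ be a left coherent ring. For each left ideal $I\subseteq R$ choose a short exact sequence of left $R$-modules $0\to R/I\to A_I\to C_I\to 0$ with $A_I$ FP-injective and $C_I$ FP-projective. Then an FP-injective left $R$-module $A$ is injective if and only if $\mathrm{Ext}^1_R(A_I,A)=0$ for all left ideals $I\subseteq R$. In other words, in the exact category of FP-injective modules (with the exact structure inherited from $R$-Mod), the cotorsion pair (FP-injective modules, injective modules) is cogenerated by the set $\{A_I\}_{I\subseteq R}$.
   Context: A left $R$-module $M$ is FP-injective if $\mathrm{Ext}^1_R(F,M)=0$ for every finitely presented left $R$-module $F$. A module $C$ is FP-projective if $\mathrm{Ext}^1_R(C,N)=0$ for every FP-injective module $N$. A ring is left coherent if every finitely generated left ideal is finitely presented. *)

(* Left R-modules are MathComp's [lmodType R]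
   (left scalar action [*:]) over an arbitrary (possibly non-commutative)
   ring [R : pzRingType]. *)
From HB Require Import structures.
From mathcomp Require Import all_boot all_order all_algebra.
Set Implicit Arguments. Unset Strict Implicit. Unset Printing Implicit Defensive.
Import GRing.Theory.
Local Open Scope ring_scope.

Section Modules.
Variable R : pzRingType.

Definition is_hom (M N : lmodType R) (f : M -> N) : Prop :=
  forall (a : R) (x y : M), f (a *: x + y) = a *: f x + f y.

Definition short_exact (M E C : lmodType R) (f : M -> E) (g : E -> C) : Prop :=
  [/\ is_hom f, is_hom g, injective f, (forall c, exists e, g e = c)
    & (forall e, g e = 0 <-> exists m, e = f m)].

(* Ext^1_R(C, M) = 0, via Yoneda: every extension of C by M splits. *)
Definition Ext1_zero (C M : lmodType R) : Prop :=
  forall (E : lmodType R) (f : M -> E) (g : E -> C), short_exact f g ->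
    exists s : C -> E, is_hom s /\ forall c, g (s c) = c.

Definition fin_presented_sub (V : lmodType R) (P : V -> Prop) : Prop :=
  exists (n : nat) (x : 'I_n -> V),
    (forall v, P v <-> exists r : 'I_n -> R, v = \sum_(i < n) r i *: x i) /\
    exists (k : nat) (rel : 'I_k -> 'I_n -> R),
      (forall j, \sum_(i < n) rel j i *: x i = 0) /\
      (forall r : 'I_n -> R, \sum_(i < n) r i *: x i = 0 ->
         exists s : 'I_k -> R, forall i, r i = \sum_(j < k) s j * rel j i).

Definition finitely_presented (F : lmodType R) : Prop :=
  fin_presented_sub (fun _ : F => True).

Definition FP_injective (M : lmodType R) : Prop :=
  forall F : lmodType R, finitely_presented F -> Ext1_zero F M.

Definition FP_projective (C : lmodType R) : Prop :=
  forall N : lmodType R, FP_injective N -> Ext1_zero C N.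

Definition injective_module (A : lmodType R) : Prop :=
  forall (X Y : lmodType R) (i : X -> Y) (f : X -> A),
    is_hom i -> injective i -> is_hom f ->
    exists h : Y -> A, is_hom h /\ forall x, h (i x) = f x.

Definition left_ideal (I : R -> Prop) : Prop :=
  [/\ I 0, (forall x y, I x -> I y -> I (x + y)) & (forall r x, I x -> I (r * x))].

Definition fin_gen_left_ideal (I : R -> Prop) : Prop :=
  exists (n : nat) (a : 'I_n -> R),
    forall v, I v <-> exists r : 'I_n -> R, v = \sum_(i < n) r i * a i.

Definition left_coherent : Prop :=
  forall I : R -> Prop, left_ideal I -> fin_gen_left_ideal I ->
    @fin_presented_sub R^o I.

(* Q is isomorphic to the cyclic module R/I: it has a generator q whose
   annihilator is exactly I (first isomorphism theorem for r |-> r *: q). *)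
Definition iso_quot (Q : lmodType R) (I : R -> Prop) : Prop :=
  exists q : Q, (forall r : R, r *: q = 0 <-> I r) /\
                (forall y : Q, exists r : R, y = r *: q).

End Modules.

(* Only "if" needs work, and by Baer's criterion it amounts to extending a
   homomorphism g : I -> A from a left ideal to R. Embed A into an injective
   module J; since R is coherent and A is FP-injective, N = J/A is
   FP-injective. Extend g to R -> J, r |-> r v. The induced map R/I -> N,
   r q |-> r v + A, extends along R/I -> A_I because Ext^1(C_I, N) = 0, and
   the extension A_I -> N lifts to s : A_I -> J because Ext^1(A_I, A) = 0.
   Then a = v - s(q) lies in A, and r a = g r for r in I since r q = 0. *)

From HB Require Import structures.
From mathcomp Require Import all_boot all_order all_algebra.
From mathcomp Require Import boolp classical_sets functions.
From mathcomp Require Import zify ring.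
Set Implicit Arguments. Unset Strict Implicit. Unset Printing Implicit Defensive.
Import GRing.Theory Num.Theory.
Local Open Scope ring_scope.

(** * Submodules and partial homomorphisms *)

Section Submodules.
Variables (R : pzRingType) (V W : lmodType R).

Definition submod (S : V -> Prop) := S 0 /\ forall a x y, S x -> S y -> S (a *: x + y).

Definition hom_on (S : V -> Prop) (h : V -> W) :=
  forall a x y, S x -> S y -> h (a *: x + y) = a *: h x + h y.

Implicit Types (S : V -> Prop) (h : V -> W).

Lemma submod0 S : submod S -> S 0. Proof. by case. Qed.

Lemma submodD S x y : submod S -> S x -> S y -> S (x + y).
Proof. by move=> [_ SZD] Sx Sy; have := SZD 1 x y Sx Sy; rewrite scale1r. Qed.

Lemma submodZ S a x : submod S -> S x -> S (a *: x).
Proof. by move=> [S0 SZD] Sx; have := SZD a x 0 Sx S0; rewrite addr0. Qed.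

Lemma submodN S x : submod S -> S x -> S (- x).
Proof. by move=> SS Sx; rewrite -scaleN1r; apply: submodZ. Qed.

Lemma submodB S x y : submod S -> S x -> S y -> S (x - y).
Proof. by move=> SS Sx Sy; apply: submodD => //; apply: submodN. Qed.

Lemma submodT : submod (fun _ : V => True). Proof. by []. Qed.

Lemma hom_on0 S h : submod S -> hom_on S h -> h 0 = 0.
Proof.
move=> [S0 _] hS; have := hS 1 0 0 S0 S0; rewrite !scale1r addr0 => h0.
by apply: (addrI (h 0)); rewrite addr0 -h0.
Qed.

Lemma hom_onD S h x y : submod S -> hom_on S h -> S x -> S y ->
  h (x + y) = h x + h y.
Proof. by move=> _ hS Sx Sy; have := hS 1 x y Sx Sy; rewrite !scale1r. Qed.

Lemma hom_onZ S h a x : submod S -> hom_on S h -> S x -> h (a *: x) = a *: h x.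
Proof.
move=> SS hS Sx; have := hS a x 0 Sx (submod0 SS).
by rewrite !addr0 (hom_on0 SS hS) addr0.
Qed.

Lemma hom_onN S h x : submod S -> hom_on S h -> S x -> h (- x) = - h x.
Proof. by move=> SS hS Sx; rewrite -scaleN1r (hom_onZ _ SS hS Sx) scaleN1r. Qed.

Lemma hom_onB S h x y : submod S -> hom_on S h -> S x -> S y ->
  h (x - y) = h x - h y.
Proof.
by move=> SS hS Sx Sy; rewrite (hom_onD SS hS Sx (submodN SS Sy)) (hom_onN SS hS Sy).
Qed.

Lemma hom_onT h : is_hom h -> hom_on (fun _ : V => True) h.
Proof. by move=> hh a x y _ _; apply: hh. Qed.

Lemma hom0 h : is_hom h -> h 0 = 0.
Proof. by move/hom_onT/(hom_on0 submodT). Qed.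

Lemma homD h x y : is_hom h -> h (x + y) = h x + h y.
Proof. by move/hom_onT/(hom_onD submodT); apply. Qed.

Lemma homZ h a x : is_hom h -> h (a *: x) = a *: h x.
Proof. by move/hom_onT/(hom_onZ a submodT); apply. Qed.

Lemma homN h x : is_hom h -> h (- x) = - h x.
Proof. by move/hom_onT/(hom_onN submodT); apply. Qed.

Lemma homB h x y : is_hom h -> h (x - y) = h x - h y.
Proof. by move/hom_onT/(hom_onB submodT); apply. Qed.

Lemma hom_sum h I r (P : pred I) (F : I -> V) : is_hom h ->
  h (\sum_(i <- r | P i) F i) = \sum_(i <- r | P i) h (F i).
Proof.
move=> hh; elim/big_rec2: _ => [|i y1 y2 _ <-]; first exact: hom0.
by rewrite homD.
Qed.

Lemma hom_sumZ h n (t : 'I_n -> R) (x : 'I_n -> V) : is_hom h ->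
  h (\sum_i t i *: x i) = \sum_i t i *: h (x i).
Proof. by move=> hh; rewrite hom_sum //; apply: eq_bigr => i _; rewrite homZ. Qed.

End Submodules.

Section Graphs.
Variables (R : pzRingType) (V W : lmodType R).

Lemma pairB (v v' : V) (w w' : W) : (v, w) - (v', w') = (v - v', w - w') :> V * W.
Proof. by []. Qed.

Lemma pairZD a (v v' : V) (w w' : W) :
  a *: (v, w) + (v', w') = (a *: v + v', a *: w + w') :> V * W.
Proof. by []. Qed.

(* Partial homomorphisms V -> W are encoded by their graphs: the submodules of
   V * W meeting 0 * W trivially. *)
Definition graph_submod (G : V * W -> Prop) := submod G /\ forall w, G (0, w) -> w = 0.

Definition graph_dom (G : V * W -> Prop) v := exists w, G (v, w).

Definition graph_fun (G : V * W -> Prop) v := xget 0 (fun w => G (v, w)).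

Lemma graph_funP G v : graph_dom G v -> G (v, graph_fun G v).
Proof. exact: xgetPex. Qed.

Lemma graph_fun_eq G v w : graph_submod G -> G (v, w) -> graph_fun G v = w.
Proof.
move=> [SG G0] Gvw; have Gv : graph_dom G v by exists w.
apply/eqP; rewrite -subr_eq0; apply/eqP/G0.
by have := submodB SG (graph_funP Gv) Gvw; rewrite pairB subrr.
Qed.

Lemma graph_dom_submod G : submod G -> submod (graph_dom G).
Proof.
move=> [G0 GZD]; split; first by exists 0.
by move=> a x y [w Gxw] [w' Gyw']; exists (a *: w + w'); apply: (GZD a _ _ Gxw Gyw').
Qed.

Lemma graph_fun_hom G : graph_submod G -> hom_on (graph_dom G) (graph_fun G).
Proof.
move=> GG a x y Gx Gy; apply: graph_fun_eq => //.
exact: (GG.1.2 a _ _ (graph_funP Gx) (graph_funP Gy)).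
Qed.

End Graphs.

Section Factorization.
Variables (R : pzRingType) (U V W : lmodType R).

Definition image_of (i : U -> V) (v : V) := exists u, v = i u.

Lemma image_of_submod (i : U -> V) : is_hom i -> submod (image_of i).
Proof.
move=> hi; split; first by exists 0; rewrite (hom0 hi).
by move=> a _ _ [u ->] [u' ->]; exists (a *: u + u'); rewrite hi.
Qed.

Lemma factor_hom (i : U -> V) (f : U -> W) : is_hom i -> is_hom f ->
  (forall u, i u = 0 -> f u = 0) ->
  exists h, hom_on (image_of i) h /\ forall u, h (i u) = f u.
Proof.
move=> hi hf ker_if; pose G (p : V * W) := exists u, p = (i u, f u).
have GG : graph_submod G.
  split; last by move=> w [u [/esym/ker_if -> ->]].
  split; first by exists 0; rewrite (hom0 hi) (hom0 hf).
  by move=> a _ _ [u ->] [u' ->]; exists (a *: u + u'); rewrite hi hf.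
have hE u : graph_fun G (i u) = f u by apply: graph_fun_eq => //; exists u.
by exists (graph_fun G); split=> // a _ _ [u ->] [u' ->]; rewrite -hi !hE hf.
Qed.

Lemma factor_epi (i : U -> V) (f : U -> W) : is_hom i -> is_hom f ->
  (forall v, exists u, i u = v) -> (forall u, i u = 0 -> f u = 0) ->
  exists h, is_hom h /\ forall u, h (i u) = f u.
Proof.
move=> hi hf i_surj ker_if; have [h [hh hiE]] := factor_hom hi hf ker_if.
have i_im v : image_of i v by have [u <-] := i_surj v; exists u.
by exists h; split=> // a v v'; apply: hh.
Qed.

Lemma factor_mono_on (S : W -> Prop) (i : U -> V) (f : W -> V) :
  is_hom i -> injective i -> submod S -> hom_on S f ->
  (forall w, S w -> image_of i (f w)) ->
  exists g, hom_on S g /\ forall w, S w -> i (g w) = f w.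
Proof.
move=> hi i_inj SS hf Sf.
have /choice [g gE] : forall w, exists u, S w -> f w = i u.
  move=> w; have [Sw|NSw] := pselect (S w); last by exists 0.
  by have [u ->] := Sf w Sw; exists u.
exists g; split=> [a x y Sx Sy|w Sw]; last by rewrite gE.
by apply: i_inj; rewrite hi -!gE ?hf //; apply: SS.2.
Qed.

End Factorization.

Section Span.
Variables (R : pzRingType) (n : nat).

Definition span_of (V : lmodType R) (x : 'I_n -> V) (v : V) :=
  exists r : 'I_n -> R, v = \sum_i r i *: x i.

Lemma lincomb_hom (V : lmodType R) (x : 'I_n -> V) :
  is_hom (fun r : 'I_n -> R^o => \sum_i (r i : R) *: x i).
Proof.
move=> a r r'; rewrite scaler_sumr -big_split; apply: eq_bigr => i _ /=.
by rewrite [(_ + _) i]/= scalerDl scalerA.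
Qed.

Lemma span_hom (V W : lmodType R) (x : 'I_n -> V) (y : 'I_n -> W) :
  (forall r, \sum_i r i *: x i = 0 -> \sum_i r i *: y i = 0) ->
  exists h, hom_on (span_of x) h /\ forall r, h (\sum_i r i *: x i) = \sum_i r i *: y i.
Proof. exact: factor_hom (lincomb_hom x) (lincomb_hom y). Qed.

End Span.

(** * Submodules and quotients as modules *)

Section SubModule.
Variables (R : pzRingType) (V : lmodType R) (S : V -> Prop) (SS : submod S).

Definition subT of submod S : Type := {x : V | S x}.
Local Notation ST := (subT SS).
HB.instance Definition _ := gen_eqMixin ST.
HB.instance Definition _ := gen_choiceMixin ST.

Definition sval_sub (x : ST) : V := proj1_sig x.
Definition in_sub x (Sx : S x) : ST := exist _ x Sx.

Lemma sval_subP (x : ST) : S (sval_sub x). Proof. exact: proj2_sig x. Qed.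

Lemma sval_sub_inj : injective sval_sub.
Proof. by move=> [x Sx] [y Sy] /= exy; subst y; congr exist; apply: Prop_irrelevance. Qed.

Let sub_zero := in_sub (submod0 SS).
Let sub_add (x y : ST) := in_sub (submodD SS (sval_subP x) (sval_subP y)).
Let sub_opp (x : ST) := in_sub (submodN SS (sval_subP x)).
Let sub_scale a (x : ST) := in_sub (submodZ a SS (sval_subP x)).

Let sub_addA : associative sub_add.
Proof. by move=> x y z; apply: sval_sub_inj; rewrite /= addrA. Qed.
Let sub_addC : commutative sub_add.
Proof. by move=> x y; apply: sval_sub_inj; rewrite /= addrC. Qed.
Let sub_add0 : left_id sub_zero sub_add.
Proof. by move=> x; apply: sval_sub_inj; rewrite /= add0r. Qed.
Let sub_addN : left_inverse sub_zero sub_opp sub_add.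
Proof. by move=> x; apply: sval_sub_inj; rewrite /= addNr. Qed.
HB.instance Definition _ := GRing.isZmodule.Build ST sub_addA sub_addC sub_add0 sub_addN.

Let sub_scaleA a b x : sub_scale a (sub_scale b x) = sub_scale (a * b) x.
Proof. by apply: sval_sub_inj; rewrite /= scalerA. Qed.
Let sub_scale1 : left_id 1 sub_scale.
Proof. by move=> x; apply: sval_sub_inj; rewrite /= scale1r. Qed.
Let sub_scaleDr : right_distributive sub_scale +%R.
Proof. by move=> a x y; apply: sval_sub_inj; rewrite /= scalerDr. Qed.
Let sub_scaleDl x : {morph sub_scale^~ x : a b / a + b}.
Proof. by move=> a b; apply: sval_sub_inj; rewrite /= scalerDl. Qed.
HB.instance Definition _ := GRing.Zmodule_isLmodule.Build R ST
  sub_scaleA sub_scale1 sub_scaleDr sub_scaleDl.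

End SubModule.

Section QuotientModule.
Variables (R : pzRingType) (V : lmodType R) (S : V -> Prop) (SS : submod S).

(* Cosets are represented by a chosen element, so that V / S is a subtype of V. *)
Let repr (v : V) : V := xget 0 (fun w => S (w - v)).

Let reprP v : S (repr v - v).
Proof.
by apply: (@xgetPex _ 0 (fun w => S (w - v))); exists v; rewrite subrr; apply: submod0.
Qed.

Let repr_eq v w : S (v - w) -> repr v = repr w.
Proof.
move=> Svw; rewrite /repr; f_equal; apply: funext => z; apply: propext; split.
- by move=> Szv; have := submodD SS Szv Svw; rewrite addrA subrK.
- by move=> Szw; have := submodB SS Szw Svw; rewrite opprB addrA subrK.
Qed.

Let repr_eqP v w : repr v = repr w -> S (v - w).
Proof.
move=> rvw; have := submodB SS (reprP w) (reprP v).
by rewrite rvw opprB addrC addrA subrK.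
Qed.

Definition quotT of submod S : Type := {v : V | repr v = v}.
Local Notation QT := (quotT SS).
HB.instance Definition _ := gen_eqMixin QT.
HB.instance Definition _ := gen_choiceMixin QT.

Let qval (x : QT) : V := proj1_sig x.

Let qval_inj : injective qval.
Proof. by move=> [x rx] [y ry] /= exy; subst y; congr exist; apply: Prop_irrelevance. Qed.

Definition coset (v : V) : QT := exist _ (repr v) (repr_eq (reprP v)).

Lemma coset_eq v w : coset v = coset w <-> S (v - w).
Proof.
split; first by move/(congr1 qval); apply: repr_eqP.
by move=> Svw; apply: qval_inj; apply: repr_eq.
Qed.

Lemma coset_surj (x : QT) : exists v, coset v = x.
Proof.
exists (qval x); apply: qval_inj; case: x => x rx /=.
by rewrite [LHS]rx.
Qed.

Let qval_coset v : S (qval (coset v) - v). Proof. exact: reprP. Qed.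

Let q_zero := coset 0.
Let q_add (x y : QT) := coset (qval x + qval y).
Let q_opp (x : QT) := coset (- qval x).
Let q_scale a (x : QT) := coset (a *: qval x).

Let q_addE v w : q_add (coset v) (coset w) = coset (v + w).
Proof.
by apply/coset_eq; rewrite opprD addrACA; exact: submodD SS (qval_coset v) (qval_coset w).
Qed.
Let q_oppE v : q_opp (coset v) = coset (- v).
Proof. by apply/coset_eq; rewrite -opprD; exact: submodN SS (qval_coset v). Qed.
Let q_scaleE a v : q_scale a (coset v) = coset (a *: v).
Proof. by apply/coset_eq; rewrite -scalerBr; exact (submodZ a SS (qval_coset v)). Qed.

Let q_addA : associative q_add.
Proof.
move=> x y z; have [u <-] := coset_surj x; have [v <-] := coset_surj y.
by have [w <-] := coset_surj z; rewrite !q_addE addrA.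
Qed.
Let q_addC : commutative q_add.
Proof.
move=> x y; have [u <-] := coset_surj x; have [v <-] := coset_surj y.
by rewrite !q_addE addrC.
Qed.
Let q_add0 : left_id q_zero q_add.
Proof. by move=> x; have [u <-] := coset_surj x; rewrite q_addE add0r. Qed.
Let q_addN : left_inverse q_zero q_opp q_add.
Proof. by move=> x; have [u <-] := coset_surj x; rewrite q_oppE q_addE addNr. Qed.
HB.instance Definition _ := GRing.isZmodule.Build QT q_addA q_addC q_add0 q_addN.

Let addqE (x y : QT) : x + y = q_add x y. Proof. by []. Qed.

Let q_scaleA a b x : q_scale a (q_scale b x) = q_scale (a * b) x.
Proof. by have [u <-] := coset_surj x; rewrite !q_scaleE scalerA. Qed.
Let q_scale1 : left_id 1 q_scale.
Proof. by move=> x; have [u <-] := coset_surj x; rewrite q_scaleE scale1r. Qed.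
Let q_scaleDr : right_distributive q_scale +%R.
Proof.
move=> a x y; have [u <-] := coset_surj x; have [v <-] := coset_surj y.
by rewrite !addqE q_addE !q_scaleE q_addE scalerDr.
Qed.
Let q_scaleDl x : {morph q_scale^~ x : a b / a + b}.
Proof.
move=> a b; have [u <-] := coset_surj x.
by rewrite !addqE !q_scaleE q_addE scalerDl.
Qed.
HB.instance Definition _ := GRing.Zmodule_isLmodule.Build R QT
  q_scaleA q_scale1 q_scaleDr q_scaleDl.

Lemma coset_hom : is_hom coset.
Proof.
move=> a v w; rewrite addqE -[_ *: coset v]/(q_scale _ _).
by rewrite q_scaleE q_addE.
Qed.

Lemma coset0 v : coset v = 0 <-> S v.
Proof. by rewrite -[0]/(coset 0) coset_eq subr0. Qed.

End QuotientModule.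

(** * Baer's criterion *)

Section Baer.
Local Open Scope classical_set_scope.
Variables (R : pzRingType) (A : lmodType R).

Definition ideal_ext := forall (I : R^o -> Prop) (g : R^o -> A),
  left_ideal I -> hom_on I g -> exists a, forall r : R, I r -> g r = r *: a.

Definition sub_hom_ext := forall (Y : lmodType R) (S : Y -> Prop) (h : Y -> A),
  submod S -> hom_on S h -> exists H, is_hom H /\ forall y, S y -> H y = h y.

Lemma left_ideal_submod (I : R -> Prop) : left_ideal I -> submod (I : R^o -> Prop).
Proof. by case=> I0 ID IM; split=> // a x y Ix Iy; apply: ID => //; apply: IM. Qed.

Lemma colon_left_ideal (Y : lmodType R) (D : Y -> Prop) (y : Y) :
  submod D -> left_ideal (fun r : R => D (r *: y)).
Proof.
move=> SD; split; first by rewrite scale0r; apply: submod0.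
  by move=> r s Dr Ds; rewrite scalerDl; apply: submodD.
by move=> r s Ds; rewrite -scalerA; apply: submodZ.
Qed.

Lemma graph_extend (Y : lmodType R) (G : Y * A -> Prop) (y : Y) : ideal_ext ->
  graph_submod G ->
  exists G', [/\ graph_submod G', G `<=` G' & graph_dom G' y].
Proof.
move=> extA GG; pose D := graph_dom G; pose F := graph_fun G.
have SD : submod D := graph_dom_submod GG.1.
have hF : hom_on (fun r : R^o => D ((r : R) *: y)) (fun r : R^o => F ((r : R) *: y)).
  move=> a r s Dr Ds /=.
  have -> : ((a *: r + s : R^o) : R) *: y = a *: ((r : R) *: y) + (s : R) *: y.
    by rewrite scalerDl scalerA.
  exact: (graph_fun_hom GG).
have [a0 Fa0] := extA _ _ (colon_left_ideal y SD) hF.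
pose G' (p : Y * A) := exists d w r, G (d, w) /\ p = (d + r *: y, w + r *: a0).
exists G'; split.
- split; first split.
  + by exists 0, 0, 0; rewrite !scale0r !addr0; split=> //; apply: submod0 GG.1.
  + move=> a _ _ [d [w [r [Gdw ->]]]] [d' [w' [r' [Gdw' ->]]]].
    exists (a *: d + d'), (a *: w + w'), (a * r + r'); split.
      by rewrite -pairZD; apply: GG.1.2.
    by rewrite pairZD; congr pair; rewrite scalerDr scalerDl scalerA addrACA.
  + move=> _ [d [w [r [Gdw [d0 ->]]]]].
    have dE : d = (- r) *: y by rewrite scaleNr; apply/eqP; rewrite -addr_eq0 -d0.
    have Dr : D ((- r) *: y) by exists w; rewrite -dE.
    by rewrite -(graph_fun_eq GG Gdw) dE -/F Fa0 // scaleNr addNr.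
- by move=> [d w] Gdw; exists d, w, 0; rewrite !scale0r !addr0.
- exists a0, 0, 0, 1; rewrite !scale1r !add0r; split=> //.
  exact: submod0 GG.1.
Qed.

Variables (Y : lmodType R) (S : Y -> Prop) (h : Y -> A).
Hypotheses (SS : submod S) (hS : hom_on S h).

Let ext_graph (G : Y * A -> Prop) := graph_submod G /\ forall y, S y -> G (y, h y).

Let ext_graph_h : ext_graph (fun p => S p.1 /\ p.2 = h p.1).
Proof.
split=> //; split; first split.
- by split; [apply: submod0 | rewrite (hom_on0 SS hS)].
- by move=> a [x u] [x' u'] /= [Sx ->] [Sx' ->]; split; [apply: SS.2 | rewrite hS].
- by move=> w /= [_ ->]; rewrite (hom_on0 SS hS).
Qed.

(* Zorn_bigcup also feeds the empty chain, whose union is empty: only nonempty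
   sets of pairs are required to be extension graphs. *)
Let chain_ext_graph (F : set (set (Y * A))) :
  F `<=` (fun G => G !=set0 -> ext_graph G) -> total_on F subset ->
  \bigcup_(G in F) G !=set0 -> ext_graph (\bigcup_(G in F) G).
Proof.
move=> FP Ftot [p0 [G0 FG0 G0p0]].
have extF G p : F G -> G p -> ext_graph G by move=> FG Gp; apply: FP => //; exists p.
have [[[G00 _] _] hG0] := extF _ _ FG0 G0p0.
split; first split; first split.
- by exists G0.
- move=> a p q [G1 FG1 G1p] [G2 FG2 G2q].
  have [G12|G21] := Ftot _ _ FG1 FG2.
  + have [[[_ G2ZD] _] _] := extF _ _ FG2 G2q.
    by exists G2 => //; apply: G2ZD => //; apply: G12.
  + have [[[_ G1ZD] _] _] := extF _ _ FG1 G1p.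
    by exists G1 => //; apply: G1ZD => //; apply: G21.
- by move=> w [G FG Gw]; have [[_ G0w] _] := extF _ _ FG Gw; apply: G0w.
- by move=> y Sy; exists G0 => //; apply: hG0.
Qed.

Hypothesis extA : ideal_ext.

Lemma baer_extend : exists H, is_hom H /\ forall y, S y -> H y = h y.
Proof.
have [G0 [PG0 G0max]] := Zorn_bigcup chain_ext_graph.
have G0ne : G0 !=set0.
  apply: contrapT => G0e; apply: (G0max _ _ (fun _ => ext_graph_h)); split.
    by move=> p G0p; case: G0e; exists p.
  move=> /(_ (0, h 0)) G0h; apply: G0e; exists (0, h 0).
  by apply: G0h; split=> //; apply: submod0.
have [GG hG0] := PG0 G0ne.
have dom_G0 y : graph_dom G0 y.
  apply: contrapT => Ny; have [G' [GG' G0G' G'y]] := graph_extend y extA GG.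
  apply: (G0max G'); first by split=> // G'G0; apply: Ny; case: G'y => w /G'G0; exists w.
  by move=> _; split=> // z Sz; apply/G0G'/hG0.
exists (graph_fun G0); split; first by move=> a u v; apply: graph_fun_hom.
by move=> u Su; apply: graph_fun_eq; last apply: hG0.
Qed.

End Baer.

Lemma baer_sub_hom_ext (R : pzRingType) (A : lmodType R) : ideal_ext A -> sub_hom_ext A.
Proof. by move=> extA Y S h SS hS; apply: baer_extend. Qed.

(** * Every module embeds into an injective one *)

Lemma int_left_ideal_principal (I : int -> Prop) : left_ideal I ->
  exists n : int, 0 <= n /\ forall k, I k <-> exists z, k = z * n.
Proof.
move=> [I0 ID IM].
have [[k [Ik k0]]|I_0] := pselect (exists k, I k /\ k != 0); last first.
  exists 0; split=> // k; split=> [Ik|[z ->]]; last by rewrite mulr0.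
  exists 0; rewrite mul0r; apply/eqP; apply: contraT => k0.
  by case: I_0; exists k.
pose P m := `[< I m%:Z /\ (0 < m)%N >].
have exP : exists m, P m.
  exists `|k|%N; apply/asboolP; split; last by rewrite absz_gt0.
  case: (intP k) Ik k0 => // n Ik _; rewrite abszN.
  by have := IM (-1) _ Ik; rewrite mulN1r opprK.
case: (ex_minnP exP) => m /asboolP [Im m_gt0] m_min.
have m_neq0 : m%:Z != 0 by rewrite eqz_nat -lt0n.
exists m%:Z; split=> // l; split=> [Il|[z ->]]; last by apply: IM.
exists (l %/ m%:Z)%Z; have lE := divz_eq l m%:Z.
suff r0 : (l %% m%:Z)%Z = 0 by rewrite [LHS]lE r0 addr0.
have Ir : I (l %% m%:Z)%Z.
  have -> : (l %% m%:Z)%Z = - (l %/ m%:Z)%Z * m%:Z + l.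
    by rewrite mulNr [X in _ = _ + X]lE addKr.
  by apply: ID => //; apply: IM.
have r_ge0 := modz_ge0 l m_neq0.
have r_lt : (l %% m%:Z < m%:Z)%Z by apply: ltz_pmod; rewrite ltz_nat.
apply/eqP; apply: contraT => r_neq0.
have : P `|(l %% m%:Z)%Z|%N by apply/asboolP; rewrite gez0_abs // absz_gt0.
move/m_min; lia.
Qed.

Definition is_int (q : zmodule rat) := exists z : int, (q : rat) = z%:~R.

Lemma is_int_submod : submod is_int.
Proof.
split; first by exists 0.
move=> a _ _ [z ->] [z' ->]; exists (z * a + z').
by rewrite /GRing.scale /= -mulrzr intrD intrM.
Qed.

Notation QZ := (quotT is_int_submod).

Definition qz (q : rat) : QZ := coset is_int_submod q.

Lemma qzZ (a : int) q : a *: qz q = qz (q * a%:~R).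
Proof. by rewrite -(homZ _ _ (coset_hom _)) /GRing.scale /= mulrzr. Qed.

Lemma qzD q q' : qz q + qz q' = qz (q + q').
Proof. by rewrite -(homD _ _ (coset_hom _)). Qed.

Lemma QZ_ideal_ext : ideal_ext QZ.
Proof.
move=> I g HI hg; have [n [_ In]] := int_left_ideal_principal HI.
have SI := left_ideal_submod HI.
have gE z : g (z * n) = z *: g n.
  by apply: (hom_onZ _ SI hg); apply/In; exists 1; rewrite mul1r.
have [n0|n_neq0] := eqVneq n 0.
  by exists 0 => r /In [z ->]; rewrite gE n0 (hom_on0 SI hg) !scaler0.
have [q gn] := coset_surj (g n).
exists (qz (q / n%:~R)) => r /In [z ->]; rewrite gE -gn !qzZ.
by congr qz; rewrite intrM; field; rewrite intr_eq0.
Qed.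

Lemma QZ_separates (M : zmodType) (d : M) : d != 0 ->
  exists phi : M -> QZ, {morph phi : x y / x + y} /\ phi d != 0.
Proof.
move=> d_neq0; pose N (k : int) := d *~ k = 0.
have NI : left_ideal N.
  split; rewrite /N; first by rewrite mulr0z.
  - by move=> x y Nx Ny; rewrite mulrzDr Nx Ny addr0.
  - by move=> r x Nx; rewrite mulrC mulrzA Nx mul0rz.
have [n [n_ge0 Nn]] := int_left_ideal_principal NI.
pose m : int := if n == 0 then 2 else n.
have m_ge2 : 2 <= m.
  rewrite /m; have [//|n_neq0] := eqVneq n 0.
  have [n1|] := eqVneq n 1; last by lia.
  by case/eqP: d_neq0; rewrite -[d]mulr1z; apply/Nn; exists 1; rewrite n1.
have m_neq0 : m%:~R != 0 :> rat by rewrite intr_eq0; lia.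
pose i (k : int^o) : zmodule M := d *~ k.
pose f (k : int^o) : QZ := qz (k%:~R / m%:~R).
have hi : is_hom i by move=> a k k'; rewrite /i /GRing.scale /= mulrzDr mulrC mulrzA.
have hf : is_hom f.
  by move=> a k k'; rewrite /f qzZ qzD; congr qz; rewrite intrD intrM; field.
have ker_if u : i u = 0 -> f u = 0.
  move=> /Nn [z ->]; apply/coset0; rewrite /m; have [->|n_neq0] := eqVneq n 0.
    by exists 0; rewrite mulr0 mul0r.
  by exists z; rewrite intrM mulfK // intr_eq0.
have [h [hh hiE]] := factor_hom hi hf ker_if.
have [H [hH HE]] := baer_extend (image_of_submod hi) hh QZ_ideal_ext.
exists H; split; first by move=> x y; have := hH 1 x y; rewrite !scale1r.
rewrite -[d]mulr1z -/(i 1) HE; last by exists 1.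
rewrite hiE; apply/negP => /eqP /coset0 [z].
move=> /(congr1 (fun x => x * m%:~R)); rewrite /= divfK // -intrM => /(@intr_inj rat) zm1.
have [z_le0|z_ge1] : z <= 0 \/ 1 <= z by lia.
all: nia.
Qed.

Section AdditiveMaps.
Variables (M N : zmodType) (f : M -> N).
Hypothesis fD : {morph f : x y / x + y}.

Lemma additive0 : f 0 = 0.
Proof. by apply: (addrI (f 0)); rewrite -fD !addr0. Qed.

Lemma additiveN x : f (- x) = - f x.
Proof. by apply: (addrI (f x)); rewrite -fD !subrr additive0. Qed.

Lemma additiveB x y : f (x - y) = f x - f y.
Proof. by rewrite fD additiveN. Qed.

Lemma additiveMz x k : f (x *~ k) = f x *~ k.
Proof.
have fMn n : f (x *+ n) = f x *+ n.
  by elim: n => [|n IHn]; rewrite ?mulr0n ?additive0 // !mulrS fD IHn.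
by case: k => n; rewrite /intmul ?additiveN fMn.
Qed.

End AdditiveMaps.

Lemma scale_intE (V : lmodType int) (a : int) (v : V) : a *: v = v *~ a.
Proof. by rewrite -[a in LHS]intz scaler_int. Qed.

(* The coinduced module Hom_Z(R, (Q/Z)^(A^+)), with A^+ = Hom_Z(A, Q/Z) and
   (r psi)(s) = psi(s r). It is injective since Q/Z is divisible, and A embeds
   into it since characters separate the points of A. *)
Section Coinduced.
Variables (R : pzRingType) (A : lmodType R).

Definition character := {phi : A -> QZ | {morph phi : x y / x + y}}.

Definition coind : Type :=
  {psi : R -> character -> QZ | forall p, {morph psi^~ p : s t / s + t}}.
HB.instance Definition _ := gen_eqMixin coind.
HB.instance Definition _ := gen_choiceMixin coind.

Definition coval (x : coind) : R -> character -> QZ := proj1_sig x.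

Lemma coval_additive (x : coind) p : {morph coval x ^~ p : s t / s + t}.
Proof. exact: (proj2_sig x). Qed.

Lemma coval_inj (x y : coind) : (forall s p, coval x s p = coval y s p) -> x = y.
Proof.
case: x => x x_add; case: y => y y_add /= exy.
have exy' : x = y by apply: funext => s; apply: funext => p; apply: exy.
by subst y; congr exist; apply: Prop_irrelevance.
Qed.

Definition mk_coind (psi : R -> character -> QZ)
  (psiD : forall p, {morph psi^~ p : s t / s + t}) : coind := exist _ psi psiD.

Let co_zero : coind := @mk_coind (fun _ _ => 0) (fun _ _ _ => esym (addr0 0)).

Let co_add_additive (x y : coind) p :
  {morph (fun s => coval x s p + coval y s p) : s t / s + t}.
Proof. by move=> s t; rewrite !coval_additive addrACA. Qed.
Let co_add (x y : coind) : coind :=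
  @mk_coind (fun s p => coval x s p + coval y s p) (co_add_additive x y).

Let co_opp_additive (x : coind) p : {morph (fun s => - coval x s p) : s t / s + t}.
Proof. by move=> s t; rewrite coval_additive opprD. Qed.
Let co_opp (x : coind) : coind :=
  @mk_coind (fun s p => - coval x s p) (co_opp_additive x).

Let co_scale_additive r (x : coind) p : {morph (fun s => coval x (s * r) p) : s t / s + t}.
Proof. by move=> s t; rewrite mulrDl coval_additive. Qed.
Let co_scale r (x : coind) : coind :=
  @mk_coind (fun s p => coval x (s * r) p) (co_scale_additive r x).

Let co_addA : associative co_add.
Proof. by move=> x y z; apply: coval_inj => s p /=; rewrite addrA. Qed.
Let co_addC : commutative co_add.
Proof. by move=> x y; apply: coval_inj => s p /=; rewrite addrC. Qed.
Let co_add0 : left_id co_zero co_add.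
Proof. by move=> x; apply: coval_inj => s p /=; rewrite add0r. Qed.
Let co_addN : left_inverse co_zero co_opp co_add.
Proof. by move=> x; apply: coval_inj => s p /=; rewrite addNr. Qed.
HB.instance Definition _ := GRing.isZmodule.Build coind co_addA co_addC co_add0 co_addN.

Let co_scaleA a b x : co_scale a (co_scale b x) = co_scale (a * b) x.
Proof. by apply: coval_inj => s p /=; rewrite mulrA. Qed.
Let co_scale1 : left_id 1 co_scale.
Proof. by move=> x; apply: coval_inj => s p /=; rewrite mulr1. Qed.
Let co_scaleDr : right_distributive co_scale +%R.
Proof. by move=> a x y; apply: coval_inj. Qed.
Let co_scaleDl x : {morph co_scale^~ x : a b / a + b}.
Proof. by move=> a b; apply: coval_inj => s p /=; rewrite mulrDr coval_additive. Qed.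
HB.instance Definition _ := GRing.Zmodule_isLmodule.Build R coind
  co_scaleA co_scale1 co_scaleDr co_scaleDl.

Lemma covalZ r (x : coind) s p : coval (r *: x) s p = coval x (s * r) p.
Proof. by []. Qed.
Lemma covalD (x y : coind) s p : coval (x + y) s p = coval x s p + coval y s p.
Proof. by []. Qed.

Definition coind_embed (a : A) : coind :=
  @mk_coind (fun s (p : character) => sval p (s *: a))
    (fun p s t => etrans (congr1 (sval p) (scalerDl a s t)) (svalP p _ _)).

Lemma coind_embed_hom : is_hom coind_embed.
Proof.
by move=> b x y; apply: coval_inj => s p /=; rewrite scalerDr scalerA (svalP p).
Qed.

Lemma coind_embed_inj : injective coind_embed.
Proof.
move=> a a' eq_aa'; apply/eqP; rewrite -subr_eq0; apply: contraT => /QZ_separates.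
move=> [phi [phiD phi_neq0]].
have := congr1 (fun x => coval x 1 (exist _ phi phiD)) eq_aa'.
rewrite /= !scale1r => phiE.
by move: phi_neq0; rewrite (additiveB phiD) phiE subrr eqxx.
Qed.

Lemma coind_sub_hom_ext : sub_hom_ext coind.
Proof.
move=> Y S h SS hS.
pose SZ (y : zmodule Y) := S y.
have SSZ : submod SZ.
  split; first exact: submod0 SS.
  by move=> a x y Sx Sy; rewrite /SZ scale_intE -(@scaler_int R Y); apply: SS.2.
have extend_at (p : character) : exists Hp : zmodule Y -> QZ,
    is_hom Hp /\ forall y, SZ y -> Hp y = coval (h y) 1 p.
  apply: (baer_extend SSZ _ QZ_ideal_ext) => a x y Sx Sy.
  rewrite scale_intE -(@scaler_int R Y) hS // covalD covalZ mul1r scale_intE.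
  by rewrite -(additiveMz (coval_additive (h x) p)).
have [H HP] := choice extend_at.
have HD p : {morph H p : x y / x + y}.
  by move=> x y; have := (HP p).1 1 x y; rewrite !scale1r.
pose Hc (y : Y) : coind := @mk_coind (fun s p => H p (s *: y))
  (fun p s t => etrans (congr1 (H p) (scalerDl y s t)) (HD p _ _)).
exists Hc; split.
  by move=> b x y; apply: coval_inj => s p /=; rewrite scalerDr scalerA HD.
move=> y Sy; apply: coval_inj => s p /=.
by rewrite (HP p).2 /SZ ?(hom_onZ _ SS hS) ?covalZ ?mul1r //; apply: submodZ.
Qed.

End Coinduced.

Lemma embeds_into_injective (R : pzRingType) (A : lmodType R) :
  exists (J : lmodType R) (j : A -> J), [/\ is_hom j, injective j & sub_hom_ext J].
Proof.
exists (coind A), (@coind_embed R A).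
by split; [apply: coind_embed_hom | apply: coind_embed_inj | apply: coind_sub_hom_ext].
Qed.

(** * Injectivity and Ext^1 *)

Section Injectivity.
Variables (R : pzRingType) (A : lmodType R).

Lemma sub_hom_ext_injective : sub_hom_ext A -> injective_module A.
Proof.
move=> extA X Y i f hi i_inj hf.
have ker_if x : i x = 0 -> f x = 0.
  by rewrite -(hom0 hi) => /i_inj ->; apply: hom0.
have [h [hh hiE]] := factor_hom hi hf ker_if.
have [H [hH HE]] := extA _ _ _ (image_of_submod hi) hh.
by exists H; split=> // x; rewrite HE ?hiE //; exists x.
Qed.

Lemma sub_hom_ext_ideal_ext : sub_hom_ext A -> ideal_ext A.
Proof.
move=> extA I g HI hg; have [H [hH HE]] := extA _ _ _ (left_ideal_submod HI) hg.
by exists (H 1) => r Ir; rewrite -HE // -(homZ _ _ hH) [_ *: _]mulr1.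
Qed.

Lemma injective_Ext1_zero (C : lmodType R) : injective_module A -> Ext1_zero C A.
Proof.
move=> injA E f g [hf hg f_inj g_surj ker_g].
have [r [hr rf]] := injA A E f id hf f_inj (fun a x y => erefl).
have hfr : is_hom (fun e => e - f (r e)).
  by move=> a x y /=; rewrite hr hf scalerBr opprD addrACA.
have ker_gfr e : g e = 0 -> e - f (r e) = 0.
  by move=> /ker_g [m ->]; rewrite rf subrr.
have [s [hs sE]] := factor_epi hg hfr g_surj ker_gfr.
exists s; split=> // c; have [e <-] := g_surj c.
by rewrite sE (homB _ _ hg) (proj2 (ker_g _) (ex_intro _ _ erefl)) subr0.
Qed.

End Injectivity.

Section Pushout.
Variables (R : pzRingType) (C M P : lmodType R).
Variables (pi : P -> C) (S : P -> Prop) (h : P -> M).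
Hypotheses (hpi : is_hom pi) (pi_surj : forall c, exists p, pi p = c)
  (ker_pi : forall p, pi p = 0 <-> S p) (hS : hom_on S h).

Let SS : submod S.
Proof.
split; first by apply/ker_pi/hom0.
by move=> a x y /ker_pi Sx /ker_pi Sy; apply/ker_pi; rewrite hpi Sx Sy scaler0 addr0.
Qed.

(* The pushout of 0 -> S -> P -> C -> 0 along h is
   (M * P) / {(h s, - s) | s in S}. *)
Let T (v : M * P) := exists s, S s /\ v = (h s, - s).

Let T_submod : submod T.
Proof.
split; first by exists 0; rewrite (hom_on0 SS hS) oppr0; split=> //; apply: submod0.
move=> a _ _ [s [Ss ->]] [s' [Ss' ->]]; exists (a *: s + s'); split; first exact: SS.2.
by rewrite pairZD hS // opprD -scalerN.
Qed.

Let fE (m : M) := coset T_submod (m, 0).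

Let fE_hom : is_hom fE.
Proof. by move=> a m m'; rewrite /fE -(coset_hom T_submod) pairZD scaler0 addr0. Qed.

Let coset_S s : S s -> coset T_submod (0, s) = fE (h s).
Proof.
move=> Ss; apply/coset_eq; exists (- s); split; first exact: submodN.
by rewrite pairB (hom_onN SS hS) // opprK sub0r subr0.
Qed.

Let pushout_exact :
  exists gE, short_exact fE gE /\ forall v, gE (coset T_submod v) = pi v.2.
Proof.
have hpi2 : is_hom (fun v : M * P => pi v.2) by move=> a v w; apply: hpi.
have ker_pi2 v : coset T_submod v = 0 -> pi v.2 = 0.
  by move=> /coset0 [s [Ss ->]]; rewrite /= (homN _ hpi) (proj2 (ker_pi s) Ss) oppr0.
have [gE [hgE gEE]] :=
  factor_epi (coset_hom T_submod) hpi2 (@coset_surj _ _ _ T_submod) ker_pi2.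
exists gE; split=> //; split=> //.
- move=> m m' /coset_eq [s [Ss]]; rewrite pairB subr0; case=> mE /esym/eqP.
  by rewrite oppr_eq0 => /eqP s0; apply/eqP; rewrite -subr_eq0 mE s0 (hom_on0 SS hS).
- by move=> c; have [p <-] := pi_surj c; exists (coset T_submod (0, p)); rewrite gEE.
- move=> e; have [[m p] <-] := coset_surj e; rewrite gEE /=; split.
    move=> /ker_pi Sp; exists (m + h p); apply/coset_eq; exists (- p).
    split; first exact: submodN.
    by rewrite pairB (hom_onN SS hS) // opprK subr0 opprD addrA subrr add0r.
  move=> [m' em]; have := gEE (m, p); rewrite em /fE gEE /= => <-.
  exact: hom0.
Qed.

Lemma Ext1_zero_extend : Ext1_zero C M ->
  exists H, is_hom H /\ forall s, S s -> H s = h s.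
Proof.
move=> extCM; have [gE [seE gEE]] := pushout_exact.
have [sg [hsg sgK]] := extCM _ _ _ seE.
pose e (p : P) := coset T_submod (0, p) - sg (pi p).
have [_ hgE fE_inj _ ker_gE] := seE.
have he : is_hom e.
  move=> a p q; rewrite /e hpi hsg.
  have -> : (0, a *: p + q) = a *: (0, p) + (0, q) :> M * P.
    by rewrite pairZD scaler0 addr0.
  by rewrite coset_hom scalerBr opprD addrACA.
have e_im p : image_of fE (e p).
  by apply/ker_gE; rewrite (homB _ _ hgE) gEE sgK subrr.
have [H [hH HE]] :=
  factor_mono_on fE_hom fE_inj (submodT P) (hom_onT he) (fun p _ => e_im p).
exists H; split; first by move=> a x y; apply: hH.
move=> s Ss; apply: fE_inj; rewrite HE // /e (proj2 (ker_pi s) Ss) (hom0 hsg) subr0.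
exact: coset_S.
Qed.

End Pushout.

Section Pullback.
Variables (R : pzRingType) (A V N X : lmodType R).
Variables (j : A -> V) (pi : V -> N) (psi : X -> N).
Hypotheses (se : short_exact j pi) (hpsi : is_hom psi).

Let PB (p : X * V) := psi p.1 = pi p.2.

Let PB_submod : submod PB.
Proof.
have [_ hpi _ _ _] := se.
split; first by rewrite /PB /= (hom0 hpsi) (hom0 hpi).
by move=> a p q PBp PBq; rewrite /PB /= hpsi hpi PBp PBq.
Qed.

Let PB_j a : PB (0, j a).
Proof.
have [_ _ _ _ ker_pi] := se.
by rewrite /PB /= (hom0 hpsi) (proj2 (ker_pi _)) //; exists a.
Qed.

Let jP (a : A) : subT PB_submod := in_sub PB_submod (PB_j a).
Let piP (p : subT PB_submod) : X := (sval_sub p).1.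

Let pullback_exact : short_exact jP piP.
Proof.
have [hj hpi j_inj pi_surj ker_pi] := se.
split=> //.
- by move=> a x y; apply: sval_sub_inj; rewrite /= pairZD scaler0 addr0 hj.
- by move=> a a' /(congr1 (fun p => (sval_sub p).2)) /j_inj.
- move=> x; have [v vE] := pi_surj (psi x).
  have PBxv : PB (x, v) by [].
  by exists (in_sub PB_submod PBxv).
- move=> p; split; last by move=> [a ->].
  case: p => [[x v] PBxv]; rewrite /piP /= => x0; subst x.
  have [a va] : exists a, v = j a by apply/ker_pi; rewrite -PBxv (hom0 hpsi).
  by exists a; apply: sval_sub_inj; rewrite /= va.
Qed.

Lemma Ext1_zero_lift : Ext1_zero X A -> exists s, is_hom s /\ forall x, pi (s x) = psi x.
Proof.
move=> extXA; have [sg [hsg sgK]] := extXA _ _ _ pullback_exact.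
exists (fun x => (sval_sub (sg x)).2); split; first by move=> a x y; rewrite hsg.
by move=> x; have := sval_subP (sg x); rewrite /PB => <-; rewrite -{2}(sgK x).
Qed.

End Pullback.

(** * Coherence and FP-injectivity *)

Section LinearCombinations.
Variables (R : pzRingType) (V : lmodType R).

Lemma scaler_sum_comb k n (t : 'I_k -> R) (m : 'I_k -> 'I_n -> R) (y : 'I_n -> V) :
  \sum_l t l *: (\sum_i m l i *: y i) = \sum_i (\sum_l t l * m l i) *: y i.
Proof.
under eq_bigr do rewrite scaler_sumr.
rewrite exchange_big; apply: eq_bigr => i _; rewrite scaler_suml.
by apply: eq_bigr => l _; rewrite scalerA.
Qed.

Lemma sum_delta_mxZ k (w : 'I_k -> V) l :
  \sum_j (delta_mx 0 l : 'rV[R]_k) 0 j *: w j = w l.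
Proof.
rewrite (bigD1 l) //= big1 => [|j /negbTE ne_jl].
  by rewrite mxE !eqxx scale1r addr0.
by rewrite mxE ne_jl andbF scale0r.
Qed.

Lemma sum_delta_row k (r : 'I_k -> R) : \sum_j r j *: delta_mx 0 j = \row_j r j.
Proof. by rewrite [RHS]row_sum_delta; apply: eq_bigr => j _; rewrite mxE. Qed.

Lemma row_comb_hom k (w : 'I_k -> V) : is_hom (fun t : 'rV[R]_k => \sum_l t 0 l *: w l).
Proof.
move=> a t t'; rewrite scaler_sumr -big_split; apply: eq_bigr => l _ /=.
by rewrite !mxE scalerDl scalerA.
Qed.

Lemma presentation_hom (F : lmodType R) n (x : 'I_n -> F) k (rel : 'I_k -> 'I_n -> R)
    (y : 'I_n -> V) :
  (forall v, span_of x v) ->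
  (forall r, \sum_i r i *: x i = 0 -> exists s, forall i, r i = \sum_l s l * rel l i) ->
  (forall l, \sum_i rel l i *: y i = 0) ->
  exists h, is_hom h /\ forall r, h (\sum_i r i *: x i) = \sum_i r i *: y i.
Proof.
move=> spanx rel_gen rely.
have /span_hom [h [hh hE]] : forall r, \sum_i r i *: x i = 0 -> \sum_i r i *: y i = 0.
  move=> r /rel_gen [s rs]; under eq_bigr do rewrite rs.
  by rewrite -scaler_sum_comb big1 // => l _; rewrite rely scaler0.
by exists h; split=> // a u v; apply: hh.
Qed.

End LinearCombinations.

Section Syzygies.
Variables (R : pzRingType) (k n : nat) (M : 'M[R]_(k, n)).

Definition syz (t : 'rV[R]_k) := t *m M = 0.

Lemma syz_submod : submod syz.
Proof.
split; first exact: mul0mx.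
by move=> a t t' tM t'M; rewrite /syz mulmxDl -scalemxAl tM t'M scaler0 addr0.
Qed.

End Syzygies.

Section Coherence.
Variable R : pzRingType.

Definition syz_fg k n (M : 'M[R]_(k, n)) := exists p (mu : 'M[R]_(p, k)),
  mu *m M = 0 /\ forall t, syz M t -> exists s : 'rV_p, t = s *m mu.

Lemma col_sum_delta m (c : 'cV[R]_m) i :
  c i 0 = \sum_j (delta_mx 0 i : 'rV_m) 0 j * c j 0.
Proof. by have := congr1 (fun A : 'M_1 => A 0 0) (rowE i c); rewrite !mxE. Qed.

Hypothesis coherentR : left_coherent R.

(* The syzygies of b are those of the generators of the finitely presented
   ideal spanned by its entries, transported along the base changes C and D. *)
Lemma col_syz_fg k (b : 'cV[R]_k) : syz_fg b.
Proof.
pose I (v : R) := exists r : 'I_k -> R, v = \sum_j r j * b j 0.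
have HI : left_ideal I.
  split.
  - by exists (fun _ => 0); rewrite big1 // => j _; rewrite mul0r.
  - move=> x y [r ->] [r' ->]; exists (fun j => r j + r' j).
    by rewrite -big_split; apply: eq_bigr => j _; rewrite mulrDl.
  - move=> s x [r ->]; exists (fun j => s * r j).
    by rewrite mulr_sumr; apply: eq_bigr => j _; rewrite mulrA.
have fgI : fin_gen_left_ideal I by exists k, (fun j => b j 0).
have [n [x [Ix [k' [rel [relx rel_gen]]]]]] := coherentR HI fgI.
pose X : 'cV_n := \col_i x i; pose Rel : 'M_(k', n) := \matrix_(l, i) rel l i.
have mulX (u : 'rV_n) : (u *m X) 0 0 = \sum_i u 0 i * x i.
  by rewrite mxE; apply: eq_bigr => i _; rewrite mxE.
have RelX : Rel *m X = 0.
  apply/matrixP => l z; rewrite ord1 !mxE -[RHS](relx l).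
  by apply: eq_bigr => i _; rewrite !mxE.
have RelP (u : 'rV_n) : u *m X = 0 -> exists s : 'rV_k', u = s *m Rel.
  move=> uX; have [s us] : exists s, forall i, u 0 i = \sum_l s l * rel l i.
    apply: rel_gen; have := congr1 (fun A : 'M_1 => A 0 0) uX.
    by rewrite mulX mxE => ux0; apply: ux0.
  exists (\row_l s l); apply/matrixP => z i; rewrite ord1 !mxE us.
  by apply: eq_bigr => l _; rewrite !mxE.
have /choice [c cE] : forall j, exists c : 'I_n -> R, b j 0 = \sum_i c i * x i.
  move=> j; apply/Ix; exists (fun j' => (delta_mx 0 j : 'rV_k) 0 j').
  exact: col_sum_delta.
have /choice [d dE] : forall i, exists d : 'I_k -> R, x i = \sum_j d j * b j 0.
  move=> i; apply/Ix; exists (fun i' => (delta_mx 0 i : 'rV_n) 0 i').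
  rewrite (_ : x i = X i 0); last by rewrite mxE.
  by rewrite col_sum_delta; apply: eq_bigr => i' _; rewrite [X i' 0]mxE.
pose C : 'M_(k, n) := \matrix_(j, i) c j i; pose D : 'M_(n, k) := \matrix_(i, j) d i j.
have bCX : b = C *m X.
  by apply/matrixP => j z; rewrite ord1 !mxE cE; apply: eq_bigr => i _; rewrite !mxE.
have XDb : X = D *m b.
  by apply/matrixP => i z; rewrite ord1 !mxE dE; apply: eq_bigr => j _; rewrite !mxE.
exists (k + k')%N, (col_mx (1%:M - C *m D) (Rel *m D)); split.
  by rewrite mul_col_mx mulmxBl mul1mx -!mulmxA -XDb -bCX RelX subrr col_mx0.
move=> t tb; have /RelP [s ts] : t *m C *m X = 0 by rewrite -mulmxA -bCX.
by exists (row_mx t s); rewrite mul_row_col mulmxBr mulmx1 !mulmxA -ts subrK.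
Qed.

(* A syzygy of row_mx b M' is s *m tau, with tau generating the syzygies of the
   column b and s a syzygy of tau *m M'. *)
Lemma mx_syz_fg n k (M : 'M[R]_(k, n)) : syz_fg M.
Proof.
elim: n k M => [|n IHn] k.
  move=> M; exists k, 1%:M; split; first by apply/matrixP => i [].
  by move=> t _; exists t; rewrite mulmx1.
change (forall M : 'M[R]_(k, 1 + n), syz_fg M) => M.
have [p1 [tau [tau_b tau_gen]]] := col_syz_fg (lsubmx M).
have [p2 [mu [mu_M' mu_gen]]] := IHn _ (tau *m rsubmx M).
exists p2, (mu *m tau); rewrite -(hsubmxK M) mul_mx_row; split.
  by rewrite -!mulmxA tau_b mu_M' mulmx0 row_mx0.
move=> t; rewrite /syz mul_mx_row => /eqP; rewrite row_mx_eq0.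
move=> /andP [/eqP /tau_gen [s ts] /eqP tM'].
have /mu_gen [s' ss'] : s *m (tau *m rsubmx M) = 0 by rewrite mulmxA -ts.
by exists s'; rewrite ts ss' mulmxA.
Qed.

Lemma syz_quotient_fp k n (M : 'M[R]_(k, n)) : finitely_presented (quotT (syz_submod M)).
Proof.
have [p [mu [muM mu_gen]]] := mx_syz_fg M.
have coset_sum (r : 'I_k -> R) :
    \sum_j r j *: coset (syz_submod M) (delta_mx 0 j) = coset (syz_submod M) (\row_j r j).
  by rewrite -hom_sumZ ?sum_delta_row //; apply: coset_hom.
exists k, (fun j => coset (syz_submod M) (delta_mx 0 j)); split.
  move=> v; split=> // _; have [t <-] := coset_surj v.
  exists (fun j => t 0 j); rewrite coset_sum.
  by congr coset; apply/rowP => j; rewrite mxE.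
exists p, (fun l j => mu l j); split.
  move=> l; rewrite coset_sum; apply/coset0.
  have -> : \row_j mu l j = row l mu by apply/rowP => j; rewrite !mxE.
  by rewrite /syz -row_mul muM row0.
move=> r; rewrite coset_sum => /coset0 /mu_gen [s rs].
by exists (fun l => s 0 l) => j; move: (congr1 (fun u : 'rV_k => u 0 j) rs); rewrite !mxE.
Qed.

Lemma FP_injective_syz_ext (A : lmodType R) k n (M : 'M[R]_(k, n)) (h : 'rV_k -> A) :
  FP_injective A -> hom_on (syz M) h ->
  exists H, is_hom H /\ forall t, syz M t -> H t = h t.
Proof.
move=> fpA hh; pose SS := syz_submod M.
apply: (Ext1_zero_extend (coset_hom SS) (@coset_surj _ _ _ SS)) => //.
  exact: coset0.
exact: fpA (syz_quotient_fp M).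
Qed.

End Coherence.

Lemma sub_hom_ext_solve (R : pzRingType) (J : lmodType R) k n (M : 'M[R]_(k, n))
    (w : 'I_k -> J) :
  sub_hom_ext J -> (forall t, syz M t -> \sum_l t 0 l *: w l = 0) ->
  exists c : 'I_n -> J, forall l, \sum_i M l i *: c i = w l.
Proof.
move=> extJ wM.
have hM : is_hom (mulmx^~ M : 'rV_k -> 'rV_n) by move=> a t t'; rewrite mulmxDl scalemxAl.
have [h [hh hE]] := factor_hom hM (row_comb_hom w) wM.
have [H [hH HE]] := extJ _ _ _ (image_of_submod hM) hh.
exists (fun i => H (delta_mx 0 i)) => l.
rewrite -hom_sumZ // sum_delta_row.
have -> : \row_i M l i = delta_mx 0 l *m M.
  by rewrite -rowE; apply/rowP => i; rewrite !mxE.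
by rewrite HE ?hE ?sum_delta_mxZ //; exists (delta_mx 0 l).
Qed.

Section Cosyzygy.
Variables (R : pzRingType) (A J N : lmodType R) (j : A -> J) (pi : J -> N).
Hypotheses (coherentR : left_coherent R) (fpA : FP_injective A).
Hypotheses (hj : is_hom j) (j_inj : injective j).

Lemma FP_injective_adjust k n (M : 'M[R]_(k, n)) (w : 'I_k -> J) :
  (forall t, syz M t -> image_of j (\sum_l t 0 l *: w l)) ->
  exists a, forall t, syz M t -> \sum_l t 0 l *: (w l - j (a l)) = 0.
Proof.
move=> w_syz.
have [g [hg gE]] := factor_mono_on hj j_inj (syz_submod M)
  (fun a t t' _ _ => row_comb_hom w a t t') w_syz.
have [H [hH HE]] := FP_injective_syz_ext coherentR fpA hg.
exists (fun l => H (delta_mx 0 l)) => t tM.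
under eq_bigr do rewrite scalerBr.
rewrite sumrB -(hom_sumZ _ _ hj) -(hom_sumZ _ _ hH) sum_delta_row.
have -> : \row_l t 0 l = t by apply/rowP => l; rewrite mxE.
by rewrite HE // gE // subrr.
Qed.

(* Lift the generators of a finitely presented F to an extension of F by N. The
   defects of the relations, lifted to J, are first corrected by elements of A
   so that every syzygy kills them (A is FP-injective and the syzygy module is
   finitely presented), and then solved for in the injective module J. *)
Lemma cosyzygy_FP_injective : short_exact j pi -> sub_hom_ext J -> FP_injective N.
Proof.
move=> [_ hpi _ pi_surj ker_pi] extJ F [n [x [spanx [k [rel [relx rel_gen]]]]]].
move=> E al be [hal hbe al_inj be_surj ker_be].
pose M : 'M_(k, n) := \matrix_(l, i) rel l i.
have /choice [y yx] : forall i, exists y, be y = x i by move=> i; apply: be_surj.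
have /choice [nn nnE] : forall l, exists m, \sum_i rel l i *: y i = al m.
  move=> l; apply/ker_be; rewrite hom_sumZ //.
  by under eq_bigr do rewrite yx; apply: relx.
have /choice [w wE] : forall l, exists v, pi v = nn l by move=> l; apply: pi_surj.
have w_syz t : syz M t -> image_of j (\sum_l t 0 l *: w l).
  move=> tM; apply/ker_pi; rewrite hom_sumZ //; under eq_bigr do rewrite wE.
  apply: al_inj; rewrite hom_sumZ // (hom0 hal); under eq_bigr do rewrite -nnE.
  rewrite scaler_sum_comb big1 // => i _.
  have := congr1 (fun u : 'rV_n => u 0 i) tM; rewrite !mxE.
  by under eq_bigr do rewrite mxE; move=> ->; rewrite scale0r.
have [a aE] := FP_injective_adjust w_syz.
have [c cE] := sub_hom_ext_solve extJ aE.
pose y' i := y i - al (pi (c i)).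
have y'rel l : \sum_i rel l i *: y' i = 0.
  rewrite /y'; under eq_bigr do rewrite scalerBr.
  rewrite sumrB nnE -(hom_sumZ _ _ hal) -(hom_sumZ _ _ hpi).
  have -> : \sum_i rel l i *: c i = w l - j (a l).
    by rewrite -cE; apply: eq_bigr => i _; rewrite mxE.
  by rewrite (homB _ _ hpi) wE (proj2 (ker_pi _) (ex_intro _ _ erefl)) subr0 subrr.
have [s [hs sE]] := presentation_hom (fun v => (spanx v).1 I) rel_gen y'rel.
exists s; split=> // v; have [r ->] := (spanx v).1 I.
rewrite sE hom_sumZ //; apply: eq_bigr => i _.
by rewrite /y' (homB _ _ hbe) yx (proj2 (ker_be _) (ex_intro _ _ erefl)) subr0.
Qed.

End Cosyzygy.

(** * Cogeneration by the modules A_I *)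

Lemma image_coset_exact (R : pzRingType) (U V : lmodType R) (i : U -> V) (hi : is_hom i) :
  injective i -> short_exact i (coset (image_of_submod hi)).
Proof.
move=> i_inj; split=> //; first exact: coset_hom.
  exact: coset_surj.
by move=> v; apply: coset0.
Qed.

Lemma Ext1_zero_ideal_ext (R : pzRingType) (Q AI CI : (R -> Prop) -> lmodType R)
  (f : forall I, Q I -> AI I) (g : forall I, AI I -> CI I) (A : lmodType R) :
  left_coherent R ->
  (forall I : R -> Prop, left_ideal I ->
     [/\ iso_quot (Q I) I, short_exact (f I) (g I),
         FP_injective (AI I) & FP_projective (CI I)]) ->
  FP_injective A -> (forall I, left_ideal I -> Ext1_zero (AI I) A) -> ideal_ext A.
Proof.
move=> coherentR AI_spec fpA extA I g0 HI hg0.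
have [J [j [hj j_inj extJ]]] := embeds_into_injective A.
have se := image_coset_exact hj j_inj; set pi := coset _ in se.
have hpi : is_hom pi := coset_hom _.
have fpN := cosyzygy_FP_injective coherentR fpA hj j_inj se extJ.
have [[q [annq genq]] [hf hg f_inj g_surj ker_g] _ projC] := AI_spec I HI.
have [v vE] : exists v, forall r : R, I r -> j (g0 r) = r *: v.
  apply: (sub_hom_ext_ideal_ext extJ HI) => a r s Ir Is /=.
  by rewrite hg0 // hj.
pose iq (r : R^o) := f I ((r : R) *: q).
have hiq : is_hom iq by move=> a r s; rewrite /iq -hf scalerDl scalerA.
have hpv : is_hom (fun r : R^o => pi ((r : R) *: v)).
  by move=> a r s; rewrite /= -hpi scalerDl scalerA.
have ker_iq r : iq r = 0 -> pi ((r : R) *: v) = 0.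
  rewrite /iq -(hom0 hf) => /f_inj /annq Ir.
  by rewrite -vE //; apply/coset0; exists (g0 r).
have [phi [hphi phiE]] := factor_hom hiq hpv ker_iq.
have ker_gI p : g I p = 0 <-> image_of iq p.
  rewrite ker_g; split=> [[m ->]|[r ->]]; last by exists ((r : R) *: q).
  by have [r ->] := genq m; exists r.
have [psi [hpsi psiE]] := Ext1_zero_extend hg g_surj ker_gI hphi (projC _ fpN).
have [s [hs sE]] := Ext1_zero_lift se hpsi (extA I HI).
have fqE : f I q = iq 1 by rewrite /iq scale1r.
have [a0 a0E] : image_of j (v - s (f I q)).
  apply/(coset0 (image_of_submod hj)).
  rewrite -/pi (homB _ _ hpi) sE psiE; last by exists 1.
  by rewrite fqE phiE scale1r subrr.
exists a0 => r Ir; apply: j_inj; rewrite (homZ _ _ hj) -a0E scalerBr -vE //.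
by rewrite -(homZ _ _ hs) -(homZ _ _ hf) (proj2 (annq r) Ir) (hom0 hf) (hom0 hs) subr0.
Qed.

Unset Implicit Arguments.
Local Close Scope ring_scope.

Theorem lemma3p4 (R : pzRingType)
  (Q AI CI : (R -> Prop) -> lmodType R)
  (f : forall I, Q I -> AI I) (g : forall I, AI I -> CI I) :
  left_coherent R ->
  (forall I : R -> Prop, left_ideal I ->
     [/\ iso_quot (Q I) I, short_exact (f I) (g I),
         FP_injective (AI I) & FP_projective (CI I)]) ->
  forall A : lmodType R, FP_injective A ->
    (injective_module A <->
     (forall I : R -> Prop, left_ideal I -> Ext1_zero (AI I) A)).
Proof.
move=> coherentR AI_spec A fpA; split=> [injA I _|extA].
  exact: injective_Ext1_zero.
apply/sub_hom_ext_injective/baer_sub_hom_ext.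
exact: Ext1_zero_ideal_ext coherentR AI_spec fpA extA.
Qed.
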